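(* Let $a_0,a_2\in\mathbb{C}$. The second-order recursion $$z_n = \frac{a_2 z_{n-2} + z_{n-1} + a_0}{z_{n-2}}$$ is periodic with period $6$ (i.e. $z_7=z_1$ and $z_8=z_2$ in $\mathbb{C}(z_1,z_2)$) if and only if $a_0=0$ and $a_2=0$, i.e. the recursion is $z_n=z_{n-1}/z_{n-2}$.
   Context: Let $z_1,z_2$ be independent indeterminates over $\mathbb{C}$ and define $z_n\in\mathbb{C}(z_1,z_2)$ for $n\ge3$ by the recursion. A second-order recursion is periodic with period $k$ if all iterates are well-defined elements of $\mathbb{C}(z_1,z_2)$ (no denominator identically zero) and $z_{k+1}=z_1$, $z_{k+2}=z_2$. *)

From HB Require Import structures.
From mathcomp Require Import all_boot all_order all_algebra.
From mathcomp Require Import fraction.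
From mathcomp Require Import complex.
From mathcomp Require Import Rstruct.
Set Implicit Arguments. Unset Strict Implicit. Unset Printing Implicit Defensive.
Import Order.TTheory GRing.Theory Num.Theory.
Local Open Scope ring_scope.

Definition CC : fieldType := (Rdefinitions.R)[i].

Definition Kz : fieldType := {fraction {poly {poly CC}}}.

Definition z1 : Kz := tofrac ('X%:P : {poly {poly CC}}).
Definition z2 : Kz := tofrac ('X : {poly {poly CC}}).
Definition cst (a : CC) : Kz := tofrac ((a%:P)%:P : {poly {poly CC}}).

(* pairs (z_{n+1}, z_{n+2}) of the recursion
   z_n = (a2 z_{n-2} + z_{n-1} + a0) / z_{n-2}; index shifted: zseq 0 = z_1. *)
Fixpoint zpair (a0 a2 : CC) (n : nat) : Kz * Kz :=
  match n with
  | 0 => (z1, z2)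
  | m.+1 => let p := zpair a0 a2 m in
            (p.2, (cst a2 * p.1 + p.2 + cst a0) / p.1)
  end.

Definition zseq (a0 a2 : CC) (n : nat) : Kz := (zpair a0 a2 n).1.

(* Every z_k (k >= 1) appears as a denominator, so "all iterates well-defined"
   means no z_k is zero in C(z1,z2); period 6 means z_7 = z_1, z_8 = z_2. *)
Definition periodic6 (a0 a2 : CC) : Prop :=
  (forall n, zseq a0 a2 n != 0) /\
  zseq a0 a2 6 = zseq a0 a2 0 /\ zseq a0 a2 7 = zseq a0 a2 1.

From mathcomp Require Import all_boot all_algebra.
From mathcomp Require Import fraction complex Rstruct.
From mathcomp Require Import ring.
Set Implicit Arguments. Unset Strict Implicit. Unset Printing Implicit Defensive.
Import GRing.Theory Num.Theory.
Local Open Scope ring_scope.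

(* Write x, y for z_1, z_2 and A, B for a_2, a_0, so that the recursion reads
   z_{n+2} z_n = A z_n + z_{n+1} + B.  If z_7 = x and z_8 = y, the recursion
   run backwards from (z_7, z_8) expresses z_6 and z_5 rationally in x and y,
   just as z_3 and z_4 are obtained forwards from (z_1, z_2); the one remaining
   step z_6 z_4 = A z_4 + z_5 + B then becomes, after clearing denominators, a
   polynomial identity in the indeterminates x and y.  Specialising it at
   (x, y) = (A, -1), (A, 1), (1, 1) forces A = 0 and then B = 0.  Conversely,
   z_n = z_{n-1} / z_{n-2} runs through x, y, y/x, 1/x, 1/y, x/y, x, y. *)

(* [x y (x - A) (y - A) (z_6 z_4 - A z_4 - z_5 - B)] with z_3, z_4, z_5, z_6
   replaced by their rational expressions in x and y. *)
Definition cycle6_poly {R : comPzRingType} (x y A B : R) : R :=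
  let N4 := A * x * y + A * x + y + B + B * x in
  let N6 := x + B + B * y - B * A in
  (x - A) * (x + B) * N4 - A * (y - A) * (x - A) * N4 - x * y * N6
  - B * x * y * (y - A) * (x - A).

Lemma cycle6_poly_rmorph (R S : comPzRingType) (f : {rmorphism R -> S}) x y A B :
  f (cycle6_poly x y A B) = cycle6_poly (f x) (f y) (f A) (f B).
Proof. by rewrite /cycle6_poly !(rmorphB, rmorphD, rmorphM). Qed.

Lemma cycle6_poly_eq0 (K : fieldType) (A B : K) (w : nat -> K) :
  w 0 != 0 -> w 1 != 0 -> w 0 - A != 0 -> w 1 - A != 0 ->
  (forall k, w k.+2 * w k = A * w k + w k.+1 + B) ->
  w 6 = w 0 -> w 7 = w 1 -> cycle6_poly (w 0) (w 1) A B = 0.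
Proof.
move=> x_neq0 y_neq0 xA_neq0 yA_neq0 rec w6 w7.
have w2 : w 2 = (A * w 0 + w 1 + B) / w 0 by rewrite -rec mulfK.
have w3 : w 3 = (A * w 1 + w 2 + B) / w 1 by rewrite -rec mulfK.
have w5 : w 5 = (w 0 + B) / (w 1 - A).
  by apply: (canRL (mulfK yA_neq0)); rewrite -w7 mulrBr mulrC rec -w6; ring.
have w4 : w 4 = (w 5 + B) / (w 0 - A).
  by apply: (canRL (mulfK xA_neq0)); rewrite -w6 mulrBr mulrC rec; ring.
have step4 : w 5 * w 3 - (A * w 3 + w 4 + B) = 0 by rewrite rec subrr.
rewrite w4 w3 w2 w5 in step4.
rewrite -(mulr0 (w 0 * w 1 * (w 0 - A) * (w 1 - A))) -step4 /cycle6_poly.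
by field; rewrite x_neq0 y_neq0 xA_neq0 yA_neq0.
Qed.

Lemma cycle6_poly_identically0 (K : fieldType) (A B : K) : (2 : K) != 0 ->
  (forall x y, cycle6_poly x y A B = 0) -> A = 0 /\ B = 0.
Proof.
move=> two_neq0 Q0.
have E1 : A ^+ 2 * (1 - B) = cycle6_poly A (-1) A B by rewrite /cycle6_poly; ring.
have E2 : A * (A + 2 * B - A * B) = - cycle6_poly A 1 A B
  by rewrite /cycle6_poly; ring.
rewrite Q0 in E1; rewrite Q0 oppr0 in E2.
have A0 : A = 0.
  apply/eqP; apply: contraNT two_neq0 => A_neq0.
  move/eqP: E1; rewrite mulf_eq0 expf_eq0 (negbTE A_neq0) /= subr_eq0.
  move/eqP=> B1; move/eqP: E2; rewrite mulf_eq0 (negbTE A_neq0) -B1 /=.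
  by rewrite !mulr1 addrAC subrr add0r.
have E3 : 2 * B ^+ 2 = cycle6_poly 1 1 A B by rewrite /cycle6_poly A0; ring.
rewrite Q0 in E3; split=> //; move/eqP: E3.
by rewrite mulf_eq0 (negbTE two_neq0) expf_eq0 => /eqP.
Qed.

Definition quot_step {K : fieldType} (p : K * K) : K * K := (p.2, p.2 / p.1).

Lemma iter_quot_step_neq0 (K : fieldType) n (x y : K) : x != 0 -> y != 0 ->
  (iter n quot_step (x, y)).1 != 0 /\ (iter n quot_step (x, y)).2 != 0.
Proof.
move=> x_neq0 y_neq0; elim: n => [|n [IH1 IH2]] //=.
by split=> //; rewrite mulf_neq0 ?invr_eq0.
Qed.

Lemma iter3_quot_step (K : fieldType) (x y : K) : x != 0 -> y != 0 ->
  iter 3 quot_step (x, y) = (x^-1, y^-1).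
Proof.
move=> x_neq0 y_neq0; rewrite /= /quot_step /=.
by congr pair; field; rewrite x_neq0 y_neq0.
Qed.

Lemma iter6_quot_step (K : fieldType) (x y : K) : x != 0 -> y != 0 ->
  iter 6 quot_step (x, y) = (x, y).
Proof.
move=> x_neq0 y_neq0; rewrite (iterD 3 3) !iter3_quot_step ?invr_neq0 //.
by rewrite !invrK.
Qed.

Lemma cst0 : cst 0 = 0.
Proof. by rewrite /cst !polyC0 rmorph0. Qed.

Lemma zseqSS a0 a2 k : zseq a0 a2 k.+2 =
  (cst a2 * zseq a0 a2 k + zseq a0 a2 k.+1 + cst a0) / zseq a0 a2 k.
Proof. by []. Qed.

Lemma zpair00 n : zpair 0 0 n = iter n quot_step (z1, z2).
Proof. by elim: n => //= n <-; rewrite cst0 mul0r add0r addr0. Qed.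

Lemma z1_subC_neq0 a : z1 - cst a != 0.
Proof. by rewrite /z1 /cst -rmorphB tofrac_eq0 -polyCB polyC_eq0 polyXsubC_eq0. Qed.

Lemma z2_subC_neq0 a : z2 - cst a != 0.
Proof. by rewrite /z2 /cst -rmorphB tofrac_eq0 polyXsubC_eq0. Qed.

Lemma z1_neq0 : z1 != 0.
Proof. by have := z1_subC_neq0 0; rewrite cst0 subr0. Qed.

Lemma z2_neq0 : z2 != 0.
Proof. by have := z2_subC_neq0 0; rewrite cst0 subr0. Qed.

Lemma cycle6_poly_generic (a0 a2 : CC) :
  cycle6_poly z1 z2 (cst a2) (cst a0) = 0 ->
  forall x y, cycle6_poly x y a2 a0 = 0.
Proof.
rewrite -cycle6_poly_rmorph => /eqP; rewrite tofrac_eq0 => /eqP P0 x y.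
by have := congr1 (fun P => P.[y%:P].[x]) P0; rewrite /cycle6_poly !hornerE.
Qed.

Lemma periodic6_coeffs_eq0 a0 a2 : periodic6 a0 a2 -> a0 = 0 /\ a2 = 0.
Proof.
move=> [zseq_neq0 [z7 z8]].
have two_neq0 : (2 : CC) != 0 by rewrite pnatr_eq0.
suff /(cycle6_poly_identically0 two_neq0)[-> ->] : forall x y : CC,
  cycle6_poly x y a2 a0 = 0 by [].
apply: cycle6_poly_generic.
apply: (cycle6_poly_eq0 (w := zseq a0 a2)) => //;
  [exact: z1_subC_neq0 | exact: z2_subC_neq0 |].
by move=> k; rewrite zseqSS divfK.
Qed.

Lemma periodic6_quotient : periodic6 0 0.
Proof.
have cycle := iter6_quot_step z1_neq0 z2_neq0.
split; last by rewrite /zseq !zpair00 [iter 7 _ _]iterS cycle.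
move=> n; rewrite /zseq zpair00.
by case: (iter_quot_step_neq0 n z1_neq0 z2_neq0).
Qed.

Theorem mainTheorem5 (a0 a2 : CC) :
  periodic6 a0 a2 <-> (a0 = 0 /\ a2 = 0).
Proof.
split; first exact: periodic6_coeffs_eq0.
by case=> -> ->; exact: periodic6_quotient.
Qed.
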